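(* Let $D$ be a division ring and $R$ a maximal subring of $D$ which is not a division ring. Then $R$ is an abelian valuation ring for $D$ if and only if $D^c\subseteq R$. In this case $R$ is a duo ring.
   Context: All rings are associative unital and subrings share the identity. A maximal subring of a ring $T$ is a proper subring maximal under inclusion among proper subrings of $T$. $D^c$ denotes the derived (commutator) subgroup of the multiplicative group $D^*=D\setminus\{0\}$, generated by all $aba^{-1}b^{-1}$. A subring $R$ is an abelian valuation ring for $D$ if it is a valuation ring of $D$ (for each $x\in D^*$, $x\in R$ or $x^{-1}\in R$) with $dRd^{-1}=R$ for all $d\in D^*$ and with abelian value group $D^*/U(R)$. A ring is duo if every one-sided ideal is two-sided. *)

From HB Require Import structures.
From mathcomp Require Import all_boot all_order all_algebra.
Set Implicit Arguments. Unset Strict Implicit. Unset Printing Implicit Defensive.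
Import GRing.Theory.
Local Open Scope ring_scope.

Definition division_ring (D : unitRingType) : Prop :=
  forall x : D, x != 0 -> x \is a GRing.unit.

Definition is_subring (D : unitRingType) (S : pred D) : Prop :=
  subring_closed S.

Definition proper_subring (D : unitRingType) (S : pred D) : Prop :=
  is_subring S /\ exists x, x \notin S.

Definition maximal_subring (D : unitRingType) (R : pred D) : Prop :=
  proper_subring R /\
  forall S : pred D, proper_subring S -> {subset R <= S} -> {subset S <= R}.

Definition subring_is_division (D : unitRingType) (S : pred D) : Prop :=
  forall x, x \in S -> x != 0 -> x^-1 \in S.

Inductive derived_subgroup (D : unitRingType) : D -> Prop :=
  | der_comm a b : a != 0 -> b != 0 -> derived_subgroup (a * b * a^-1 * b^-1)
  | der_one : derived_subgroup 1
  | der_mul x y : derived_subgroup x -> derived_subgroup y -> derived_subgroup (x * y)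
  | der_inv x : derived_subgroup x -> derived_subgroup x^-1.

Definition sub_unit (D : unitRingType) (R : pred D) (x : D) : Prop :=
  x \in R /\ x != 0 /\ x^-1 \in R.

Definition valuation_ring (D : unitRingType) (R : pred D) : Prop :=
  is_subring R /\ forall x : D, x != 0 -> x \in R \/ x^-1 \in R.

(* Abelian valuation ring: valuation ring, invariant under all inner
   automorphisms (d R d^-1 = R), with abelian value group D^*/U(R).
   Commutativity of the quotient is stated as equality of cosets:
   (a U(R)) (b U(R)) = (b U(R)) (a U(R)), i.e. (b a)^-1 (a b) ∈ U(R). *)
Definition abelian_valuation_ring (D : unitRingType) (R : pred D) : Prop :=
  valuation_ring R /\
  (forall d : D, d != 0 -> forall x : D, (d * x * d^-1 \in R) <-> (x \in R)) /\
  (forall a b : D, a != 0 -> b != 0 -> sub_unit R ((b * a)^-1 * (a * b))).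

Definition left_ideal_of (D : unitRingType) (R : pred D) (I : pred D) : Prop :=
  {subset I <= R} /\ 0 \in I /\
  (forall x y, x \in I -> y \in I -> x - y \in I) /\
  (forall r x, r \in R -> x \in I -> r * x \in I).

Definition right_ideal_of (D : unitRingType) (R : pred D) (I : pred D) : Prop :=
  {subset I <= R} /\ 0 \in I /\
  (forall x y, x \in I -> y \in I -> x - y \in I) /\
  (forall r x, r \in R -> x \in I -> x * r \in I).

Definition duo_ring (D : unitRingType) (R : pred D) : Prop :=
  (forall I : pred D, left_ideal_of R I -> right_ideal_of R I) /\
  (forall I : pred D, right_ideal_of R I -> left_ideal_of R I).

From HB Require Import structures.
From mathcomp Require Import all_boot all_order all_algebra.
From mathcomp Require Import boolp.
Set Implicit Arguments. Unset Strict Implicit.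
Import GRing.Theory.
Local Open Scope ring_scope.

(* If D^c is contained in R, then R is stable under conjugation, since
   d x d^-1 = (d x d^-1 x^-1) x.  Hence for w in R the overring R[w^-1] is a
   ring, and maximality gives (1 + a b)^-1 \in R for every nonunit a and every
   b of R: otherwise R[(1 + a b)^-1] = D, yet a^-1 (1 + a b)^n \in a^-1 + R.
   So the nonunits of R form an ideal M with 1 - M inside U(R).  If neither x
   nor x^-1 lies in R, then R[x] = R[x^-1] = D; writing a^-1, for a nonzero
   a \in M, as a polynomial in x and in x^-1 and multiplying by a yields
   relations 1 = sum m_i x^i and 1 = sum m'_j x^-j with coefficients in M.
   Chevalley's argument lowers the degree of one of them until 1 \in M, a
   contradiction; thus R is a valuation ring, and its value group is abelian
   because (b a)^-1 (a b) is a commutator.  Conversely, in an abelian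
   valuation ring every commutator is a unit of R.  Finally x r = (x r x^-1) x
   makes every conjugation-stable subring duo. *)

(* The disjunct [a == 0] is needed because [0^-1 = 0]. *)
Definition nonunits (D : unitRingType) (R : pred D) : pred D :=
  [pred a | (a \in R) && ((a == 0) || (a^-1 \notin R))].

(* R[w^-1] as the union of the R w^-n, and R[x] as left polynomials in x. *)
Definition adjoin_inv (D : unitRingType) (R : pred D) (w : D) : pred D :=
  fun z => `[< exists n, z * w ^+ n \in R >].

Definition adjoin (D : unitRingType) (R : pred D) (x : D) : pred D :=
  fun z => `[< exists2 p : {poly D}, p \is a polyOver R & z = p.[x] >].

Definition nonunit_relation (D : unitRingType) (R : pred D) (x : D) (n : nat) :=
  exists2 p : {poly D}, p \is a polyOver (nonunits R) & (size p <= n.+1)%N /\ p.[x] = 1.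

Lemma unitr_neq0 (D : unitRingType) (x : D) : x \is a GRing.unit -> x != 0.
Proof. by apply: contraTneq => ->; rewrite unitr0. Qed.

Lemma sum_inv_powers_mulXn (D : unitRingType) (x : D) (q : {poly D}) n :
  x \is a GRing.unit ->
  (\sum_(j < n.+1) q`_j.+1 * x^-1 ^+ j.+1) * x ^+ n.+1 =
  \sum_(i < n.+1) q`_(n - i).+1 * x ^+ i.
Proof.
move=> ux; rewrite mulr_suml (reindex_inj rev_ord_inj) /=; apply: eq_bigr => i _.
have -> : x ^+ n.+1 = x ^+ (n - i).+1 * x ^+ i by rewrite -exprD addSn subnK // -ltnS.
by rewrite subSS exprVn -mulrA mulKr // unitrX.
Qed.

Section SubringOfDivisionRing.

Variables (D : unitRingType) (R : pred D).
Hypotheses (divD : division_ring D) (subR : subring_closed R).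
#[local] HB.instance Definition _ := GRing.isSubringClosed.Build D R subR.

Lemma sub_unit1 : sub_unit R 1.
Proof. by rewrite /sub_unit invr1 rpred1 oner_neq0. Qed.

Lemma sub_unitV x : sub_unit R x -> sub_unit R x^-1.
Proof. by case=> xR [xn0 xVR]; rewrite /sub_unit invrK invr_neq0. Qed.

Lemma sub_unitM x y : sub_unit R x -> sub_unit R y -> sub_unit R (x * y).
Proof.
case=> xR [xn0 xVR] [yR [yn0 yVR]].
have [ux uy] := (divD xn0, divD yn0).
by rewrite /sub_unit rpredM // invrM // rpredM // unitr_neq0 // unitrMl.
Qed.

Lemma abelian_valuation_derived_sub_unit :
  abelian_valuation_ring R -> forall x, derived_subgroup x -> sub_unit R x.
Proof.
case=> _ [_ abelianR] x; elim=> [a b an0 bn0||y z _ uy _ uz|y _ uy].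
- have := abelianR _ _ (invr_neq0 an0) (invr_neq0 bn0).
  by rewrite invrM ?unitrV ?divD // !invrK mulrA.
- exact: sub_unit1.
- exact: sub_unitM.
- exact: sub_unitV.
Qed.

Lemma abelian_valuation_duo : abelian_valuation_ring R -> duo_ring R.
Proof.
case=> _ [conjR _]; split=> I [IR [I0 [IB IM]]]; do 3 split=> //.
- move=> r x rR xI; have [->|xn0] := eqVneq x 0; first by rewrite mul0r.
  rewrite -(divrK (divD xn0) (x * r)) IM //.
  by apply/(conjR x xn0).
- move=> r x rR xI; have [->|xn0] := eqVneq x 0; first by rewrite mulr0.
  have ux := divD xn0.
  have -> : r * x = x * (x^-1 * r * x^-1^-1) by rewrite invrK !mulrA mulrV ?mul1r.
  by rewrite IM //; apply/(conjR _ (invr_neq0 xn0)).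
Qed.

Lemma expr_1addM a b n : a \in R -> b \in R ->
  exists2 c, c \in R & (1 + a * b) ^+ n = 1 + a * c.
Proof.
move=> aR bR; elim: n => [|n [c cR IH]]; first by exists 0; rewrite ?rpred0 // mulr0 addr0.
exists (b + c + c * (a * b)); first by rewrite !rpredD ?rpredM.
by rewrite exprSr IH mulrDl mul1r !mulrDr mulr1 !mulrA !addrA.
Qed.

Lemma nonunits0 : 0 \in nonunits R.
Proof. by rewrite inE rpred0 eqxx. Qed.

Lemma nonunits1 : 1 \notin nonunits R.
Proof. by rewrite inE invr1 rpred1 oner_eq0. Qed.

Lemma nonunits_invNmem a : a \in nonunits R -> a != 0 -> a^-1 \notin R.
Proof. by rewrite inE => /andP[_ /orP[/eqP->|]]; rewrite ?eqxx. Qed.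

Lemma nonunitsMr m r : m \in nonunits R -> r \in R -> m * r \in nonunits R.
Proof.
rewrite !inE => /andP[mR mNU] rR; rewrite rpredM //=.
have [->|mn0] := eqVneq m 0; first by rewrite mul0r eqxx.
have [->|rn0] := eqVneq r 0; first by rewrite mulr0 eqxx.
rewrite (negPf mn0) /= in mNU; apply/orP; right; apply: contra mNU => mrVR.
have -> : m^-1 = r * (m * r)^-1 by rewrite invrM ?divD // mulVKr ?divD.
exact: rpredM.
Qed.

Section DerivedSubgroupInR.

Hypothesis derR : forall x, derived_subgroup x -> x \in R.

Lemma derived_conj_mem d x : d != 0 -> x \in R -> d * x * d^-1 \in R.
Proof.
move=> dn0 xR; have [->|xn0] := eqVneq x 0; first by rewrite mulr0 mul0r rpred0.
rewrite -(divrK (divD xn0) (d * x * d^-1)) rpredM //.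
exact/derR/der_comm.
Qed.

Lemma derived_value_group_abelian a b :
  a != 0 -> b != 0 -> sub_unit R ((b * a)^-1 * (a * b)).
Proof.
move=> an0 bn0; have [ua ub] := (divD an0, divD bn0).
have -> : (b * a)^-1 * (a * b) = a^-1 * b^-1 * a^-1^-1 * b^-1^-1.
  by rewrite invrM // !invrK !mulrA.
have comm := der_comm (invr_neq0 an0) (invr_neq0 bn0).
split; first exact: derR.
split; last exact/derR/der_inv.
by rewrite unitr_neq0 // !unitrMl ?unitrV.
Qed.

End DerivedSubgroupInR.

Section NormalMaximalSubring.

Hypothesis maxR :
  forall S : pred D, proper_subring S -> {subset R <= S} -> {subset S <= R}.
Hypothesis conjR : forall d x, d != 0 -> x \in R -> d * x * d^-1 \in R.

Lemma maximal_overring_full (S : pred D) y :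
  is_subring S -> {subset R <= S} -> (exists2 z, z \in S & z \notin R) -> y \in S.
Proof.
move=> subS RS [z zS zNR]; apply/negPn/negP => yNS.
have SR : {subset S <= R} by apply: maxR RS; split=> //; exists y.
by rewrite SR in zNR.
Qed.

Lemma adjoin_inv_subring w : w \in R -> w != 0 -> is_subring (adjoin_inv R w).
Proof.
move=> wR wn0; have uw := divD wn0.
split.
- by apply/asboolP; exists 0%N; rewrite mulr1 rpred1.
- move=> y z /asboolP[n yR] /asboolP[m zR]; apply/asboolP; exists (n + m)%N.
  rewrite mulrBl rpredB //; first by rewrite exprD mulrA rpredM ?rpredX.
  by rewrite addnC exprD mulrA rpredM ?rpredX.
- move=> y z /asboolP[n yR] /asboolP[m zR]; apply/asboolP; exists (n + m)%N.
  have uwn := unitrX n uw.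
  have -> : y * z * w ^+ (n + m) =
            (y * w ^+ n) * ((w ^+ n)^-1 * (z * w ^+ m) * (w ^+ n)^-1^-1).
    by rewrite invrK !mulrA mulrK // -!mulrA -exprD addnC.
  by rewrite rpredM // conjR // invr_neq0 // unitr_neq0.
Qed.

Lemma inv_1addM_mem a b : a \in R -> a^-1 \notin R -> b \in R -> (1 + a * b)^-1 \in R.
Proof.
move=> aR aVNR bR; set w := 1 + a * b.
have wR : w \in R by rewrite rpredD ?rpredM ?rpred1.
have an0 : a != 0 by apply: contraNneq aVNR => ->; rewrite invr0 rpred0.
have ua := divD an0.
have wn0 : w != 0.
  apply: contraNneq aVNR => w0.
  have : a * - b = 1 by apply/eqP; rewrite mulrN eq_sym -addr_eq0 -/w w0.
  by move/(canRL (mulKr ua)); rewrite mulr1 => <-; rewrite rpredN.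
apply/negPn/negP => wVNR.
suff /asboolP[n] : a^-1 \in adjoin_inv R w.
  have [c cR ->] := expr_1addM n aR bR.
  by rewrite mulrDr mulr1 mulrA mulVr // mul1r rpredDr // (negPf aVNR).
apply: maximal_overring_full; first exact: adjoin_inv_subring.
  by move=> z zR; apply/asboolP; exists 0%N; rewrite mulr1.
by exists w^-1 => //; apply/asboolP; exists 1%N; rewrite mulVr ?divD ?rpred1.
Qed.

Lemma inv_1sub_nonunit_mem q : q \in nonunits R -> (1 - q)^-1 \in R.
Proof.
move=> qM; have [->|qn0] := eqVneq q 0; first by rewrite subr0 invr1 rpred1.
rewrite -mulrN1 inv_1addM_mem ?rpredN ?rpred1 ?nonunits_invNmem //.
by case/andP: qM.
Qed.

Lemma nonunitsD a b : a \in nonunits R -> b \in nonunits R -> a + b \in nonunits R.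
Proof.
move=> aM bM; rewrite inE rpredD //=; [|by case/andP: aM|by case/andP: bM].
have [//|sn0] := eqVneq (a + b) 0.
apply/orP; right; apply/negP => sVR; set v := (a + b)^-1 in sVR.
have avM : a * v \in nonunits R := nonunitsMr aM sVR.
have bvE : b * v = 1 - a * v.
  by apply/eqP; rewrite eq_sym subr_eq -mulrDl addrC mulrV ?divD.
have bvn0 : b * v != 0.
  by rewrite bvE subr_eq0; apply: contraNneq nonunits1 => ->.
have bn0 : b != 0 by apply: contraNneq bvn0 => ->; rewrite mul0r.
have uv : v \is a GRing.unit by rewrite unitrV divD.
have bVE : b^-1 = v * (b * v)^-1 by rewrite invrM ?mulVKr // divD.
by move: (nonunits_invNmem bM bn0); rewrite bVE rpredM // bvE inv_1sub_nonunit_mem.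
Qed.

#[local] HB.instance Definition _ :=
  GRing.isAddClosed.Build D (nonunits R) (conj nonunits0 nonunitsD).

Section Adjoin.

Variable x : D.
Hypothesis xn0 : x != 0.

Lemma adjoin_horner p : p \is a polyOver R -> p.[x] \in adjoin R x.
Proof. by move=> pR; apply/asboolP; exists p. Qed.

Lemma adjoin_zmod : zmod_closed (adjoin R x).
Proof.
split; first by rewrite -(horner0 x) adjoin_horner ?rpred0.
move=> _ _ /asboolP[p pR ->] /asboolP[q qR ->].
by rewrite -hornerN -hornerD adjoin_horner ?rpredB.
Qed.

#[local] HB.instance Definition _ := GRing.isZmodClosed.Build D (adjoin R x) adjoin_zmod.

Lemma adjoin_monomial r i : r \in R -> r * x ^+ i \in adjoin R x.
Proof.
by move=> rR; rewrite -hornerXn -hornerCM adjoin_horner ?rpredM ?polyOverC ?polyOverXn.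
Qed.

Lemma adjoin_subring : is_subring (adjoin R x).
Proof.
split; first by rewrite -(expr0 x) -[_ ^+ 0]mul1r adjoin_monomial ?rpred1.
  exact: rpredB.
move=> _ _ /asboolP[p /polyOverP pR ->] /asboolP[q /polyOverP qR ->].
rewrite !horner_coef mulr_suml rpred_sum // => i _; rewrite mulr_sumr rpred_sum // => j _.
have uxi := unitrX i (divD xn0).
have -> : p`_i * x ^+ i * (q`_j * x ^+ j) =
          p`_i * (x ^+ i * q`_j * (x ^+ i)^-1) * x ^+ (i + j).
  by rewrite exprD !mulrA divrK.
by rewrite adjoin_monomial // rpredM // conjR // unitr_neq0.
Qed.

End Adjoin.

Lemma nonunit_relation0 x : ~ nonunit_relation R x 0.
Proof.
case=> p /polyOverP pM [size_p px]; move: px (pM 0%N).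
rewrite (horner_coef_wide _ size_p) big_ord1 mulr1 => ->.
exact/negP/nonunits1.
Qed.

Lemma nonunit_relation_lower x n : x != 0 ->
  nonunit_relation R x n.+1 -> nonunit_relation R x^-1 n.+1 -> nonunit_relation R x n.
Proof.
move=> xn0 [p /polyOverP pM [size_p px]] [q /polyOverP qM [size_q qxV]].
have ux := divD xn0.
pose v := (1 - q`_0)^-1.
have vR : v \in R := inv_1sub_nonunit_mem (qM 0%N).
have uvE : 1 - q`_0 = \sum_(j < n.+1) q`_j.+1 * x^-1 ^+ j.+1.
  by rewrite -{1}qxV (horner_coef_wide _ size_q) big_ord_recl mulr1 addrAC subrr add0r.
have u_neq0 : 1 - q`_0 != 0.
  by rewrite subr_eq0; apply: contraNneq nonunits1 => ->.
(* Chevalley's step: the relation for x^-1, times x^(n+1), rewrites x^(n+1). *)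
have xnE : x ^+ n.+1 = \sum_(i < n.+1) v * q`_(n - i).+1 * x ^+ i.
  rewrite -[LHS](mulKr (divD u_neq0)) -/v uvE sum_inv_powers_mulXn // mulr_sumr.
  by apply: eq_bigr => i _; rewrite mulrA.
exists (\poly_(i < n.+1) (p`_i + p`_n.+1 * v * q`_(n - i).+1)); last first.
  split; first exact: size_poly.
  rewrite -px (horner_coef_wide _ size_p) big_ord_recr /= xnE mulr_sumr horner_poly.
  by rewrite -big_split; apply: eq_bigr => i _; rewrite mulrDl !mulrA.
apply/polyOverP => i; rewrite coef_poly; case: ifP => _; last exact: rpred0.
have qR j : q`_j \in R by case/andP: (qM j).
by rewrite rpredD // !nonunitsMr.
Qed.

Lemma no_nonunit_relation_pair x n k :
  x != 0 -> nonunit_relation R x n -> ~ nonunit_relation R x^-1 k.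
Proof.
have [N] := ubnP (n + k); elim: N x n k => // N IH x n k nkN xn0 relx relxV.
wlog kn : x n k nkN xn0 relx relxV / (k <= n)%N.
  move=> wlog_kn; have [|/ltnW nk] := leqP k n; first exact: (wlog_kn x n k).
  by apply: (wlog_kn x^-1 k n); rewrite ?invrK ?invr_neq0 // addnC.
case: n nkN relx kn => [_ /nonunit_relation0 //|n nkN relx kn].
have [q qM [size_q qxV]] := relxV.
have relxV' : nonunit_relation R x^-1 n.+1.
  by exists q => //; split=> //; apply: leq_trans size_q _.
exact: (IH x n k) (nonunit_relation_lower xn0 relx relxV') relxV.
Qed.

Lemma nonunit_relation_of_notin a x : a \in nonunits R -> a != 0 ->
  x \notin R -> exists n, nonunit_relation R x n.
Proof.
move=> aM an0 xNR; have xn0 : x != 0 by apply: contraNneq xNR => ->; exact: rpred0.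
have /asboolP[p pR aVE] : a^-1 \in adjoin R x.
  apply: maximal_overring_full; first exact: adjoin_subring.
    by move=> r rR; have := adjoin_monomial x 0 rR; rewrite mulr1.
  by exists x => //; have := adjoin_monomial x 1 (rpred1 _); rewrite mul1r.
exists (size (a%:P * p)); exists (a%:P * p); last first.
  by split=> //; rewrite hornerCM -aVE mulrV ?divD.
apply/polyOverP => i; rewrite coefCM nonunitsMr //.
exact: (polyOverP pR).
Qed.

Lemma normal_maximal_valuation :
  ~ subring_is_division R -> forall x, x != 0 -> x \in R \/ x^-1 \in R.
Proof.
move=> ndR x xn0.
have [a aM an0] : exists2 a, a \in nonunits R & a != 0.
  apply: contrapT => noa; apply: ndR => y yR yn0; apply/negPn/negP => yVNR.
  by apply: noa; exists y; rewrite // inE yR yVNR orbT.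
have [xR|xNR] := boolP (x \in R); first by left.
have [xVR|xVNR] := boolP (x^-1 \in R); first by right.
have [n relx] := nonunit_relation_of_notin aM an0 xNR.
have [k relxV] := nonunit_relation_of_notin aM an0 xVNR.
by case: (no_nonunit_relation_pair xn0 relx relxV).
Qed.

End NormalMaximalSubring.

Lemma derived_abelian_valuation :
  (forall S : pred D, proper_subring S -> {subset R <= S} -> {subset S <= R}) ->
  ~ subring_is_division R ->
  (forall x, derived_subgroup x -> x \in R) -> abelian_valuation_ring R.
Proof.
move=> maxR ndR derR; have conjR := derived_conj_mem derR.
split; first by split=> //; exact: normal_maximal_valuation.
split; last exact: derived_value_group_abelian.
move=> d dn0 x; split=> [dxdVR|]; last exact: conjR.
have ud := divD dn0.
have -> : x = d^-1 * (d * x * d^-1) * d^-1^-1 by rewrite invrK !mulrA mulVr // mul1r divrK.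
by rewrite conjR ?invr_neq0.
Qed.

End SubringOfDivisionRing.

Theorem proposition3p4 (D : unitRingType) (R : pred D) :
  division_ring D ->
  maximal_subring R ->
  ~ subring_is_division R ->
  ((abelian_valuation_ring R <-> (forall x : D, derived_subgroup x -> x \in R))
   /\ (abelian_valuation_ring R -> duo_ring R)).
Proof.
move=> divD [[subR _] maxR] ndR.
split; last exact: abelian_valuation_duo.
split=> [avR x /(abelian_valuation_derived_sub_unit divD subR avR)[] // | derR].
exact: derived_abelian_valuation.
Qed.
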